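(* For every integer $d \geq 2$, $$\overline{\bigcup_{s\geq 1}\mathsf U_{d,s}}=\mathsf B_d,$$ where the closure is taken in $\mathbb R^{d\times d}$.
   Context: $\mathsf B_d$ denotes the set of $d\times d$ bistochastic matrices (real matrices with non-negative entries whose rows and columns each sum to $1$). For integers $d\ge 2$, $s\ge 1$, a matrix $U\in\mathcal U(ds)$ (the group of $ds\times ds$ complex unitary matrices) is viewed as a $d\times d$ block matrix with blocks $U_{ij}\in M_s(\mathbb C)$, $i,j\in\{1,\dots,d\}$. Define $\phi_{d,s}(U)=\big(\tfrac1s\|U_{ij}\|_F^2\big)_{i,j=1}^d$, where $\|X\|_F=\operatorname{Tr}(XX^* )^{1/2}$ is the Frobenius norm, and $\mathsf U_{d,s}:=\phi_{d,s}(\mathcal U(ds))$ (the generalized unistochastic matrices). *)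

From HB Require Import structures.
From mathcomp Require Import all_boot all_order all_algebra.
From mathcomp Require Import all_classical all_reals all_analysis.
From mathcomp Require Import complex.

Set Implicit Arguments.
Unset Strict Implicit.
Unset Printing Implicit Defensive.

Import Order.TTheory GRing.Theory Num.Theory.
Import numFieldTopology.Exports.
Local Open Scope ring_scope.
Local Open Scope classical_set_scope.

Definition bistochastic (R : realType) (d : nat) : set 'M[R]_d :=
  [set B | (forall i j, 0 <= B i j)
         /\ (forall i, \sum_(j < d) B i j = 1)
         /\ (forall j, \sum_(i < d) B i j = 1)].

Definition adjmx (R : realType) m n (A : 'M[R[i]]_(m, n)) : 'M[R[i]]_(n, m) :=
  (map_mx (@conjc R) A)^T.

Definition unitary (R : realType) n (U : 'M[R[i]]_n) : Prop :=
  U *m adjmx U = 1%:M /\ adjmx U *m U = 1%:M.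

Definition sqmod (R : realType) (z : R[i]) : R :=
  (complex.Re z) ^+ 2 + (complex.Im z) ^+ 2.

(** The (i,j) block of size s x s of a ds x ds matrix: rows/columns of block i
    are indexed by mxvec_index i a = i * s + a, a < s. *)
Definition blockmx (T : Type) (d s : nat) (U : 'M[T]_(d * s)) (i j : 'I_d)
  : 'M[T]_s :=
  \matrix_(a < s, b < s) U (mxvec_index i a) (mxvec_index j b).

Definition frob2 (R : realType) s (X : 'M[R[i]]_s) : R :=
  \sum_(a < s) \sum_(b < s) sqmod (X a b).

Definition phi (R : realType) (d s : nat) (U : 'M[R[i]]_(d * s)) : 'M[R]_d :=
  \matrix_(i < d, j < d) (s%:R^-1 * frob2 (blockmx U i j)).

Definition gen_unistochastic (R : realType) (d s : nat) : set 'M[R]_d :=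
  [set B | exists U : 'M[R[i]]_(d * s), unitary U /\ @phi R d s U = B].

Definition gen_unistochastic_all (R : realType) (d : nat) : set 'M[R]_d :=
  \bigcup_(s in [set s : nat | (0 < s)%N]) @gen_unistochastic R d s.

(* The image of phi_{d,s} on unitaries lies in B_d, because the rows and
   columns of a unitary matrix are unit vectors, and B_d is closed.
   Conversely, if P is the permutation matrix of size ds of a permutation p,
   then the (i, j) block of P has squared Frobenius norm equal to the number
   of rows of block-row i that p sends into block-column j; a suitable p thus
   realises phi_{d,s}(P) = K / s for any nonnegative integer matrix K with all
   line sums equal to s.  These matrices are dense in B_d: pull B slightly
   towards the identity so that its corner entry is large, scale by s, round
   down the entries off the last row and column, and complete the last column
   and then the last row so that every line sums to s, at a cost of at most
   (d - 1)^2 / s per entry. *)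

From HB Require Import structures.
From mathcomp Require Import all_boot all_order all_algebra all_fingroup.
From mathcomp Require Import all_classical all_reals all_analysis.
From mathcomp Require Import complex lra.
Import numFieldTopology.Exports.

Set Implicit Arguments.
Unset Strict Implicit.
Unset Printing Implicit Defensive.
Import Order.TTheory GRing.Theory Num.Theory.
Local Open Scope ring_scope.
Local Open Scope classical_set_scope.

Lemma sum_mxvec_index (V : nmodType) d s (F : 'I_(d * s) -> V) :
  \sum_(j < d) \sum_(b < s) F (mxvec_index j b) = \sum_k F k.
Proof.
have [g gK Kg] := curry_mxvec_bij d s.
rewrite (reindex (uncurry (@mxvec_index d s))) /=; last first.
  by exists g => k _; [apply: gK | apply: Kg].
by rewrite pair_big /=; apply: eq_bigr => -[].
Qed.

Lemma eq_fibres_perm m (T : eqType) (f g : 'I_m -> T) :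
  (forall y, #|[pred x | f x == y]| = #|[pred x | g x == y]|) ->
  exists p : 'S_m, forall x, f x = g (p x).
Proof.
move=> fib.
have count_fibre (h : 'I_m -> T) y :
    count_mem y [tuple h x | x < m] = #|[pred x | h x == y]|.
  by rewrite /= count_map cardE size_filter enumT.
have /tuple_permP[p /val_inj fg] :
    perm_eq [tuple f x | x < m] [tuple g x | x < m].
  by apply/allP => y _ /=; rewrite !count_fibre fib.
by exists p => x; move/(congr1 (fun t => tnth t x)): fg; rewrite !tnth_mktuple.
Qed.

Definition mxvec_unindex {d s} (k : 'I_(d * s)) : 'I_d * 'I_s :=
  enum_val (cast_ord (esym (mxvec_cast d s)) k).

Lemma mxvec_indexK d s i a : mxvec_unindex (@mxvec_index d s i a) = (i, a).
Proof. by rewrite /mxvec_unindex /mxvec_index cast_ordK enum_rankK. Qed.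

Lemma eq_mxvec_index d s i a j b :
  (@mxvec_index d s i a == mxvec_index j b) = ((i, a) == (j, b)).
Proof.
by apply/eqP/eqP => [/(congr1 mxvec_unindex)|[-> ->]]; rewrite ?mxvec_indexK.
Qed.

Lemma card_sum_mxvec_index d s (P : pred 'I_(d * s)) :
  #|P| = (\sum_(i < d) #|[pred a : 'I_s | P (mxvec_index i a)]|)%N.
Proof.
rewrite -sum1_card big_mkcond /= -(sum_mxvec_index (fun k => (P k : nat))).
apply: eq_bigr => i _; rewrite -sum1_card [RHS]big_mkcond /=.
by apply: eq_bigr => a _; rewrite inE; case: (P _).
Qed.

Lemma exists_block_perm d s (K : 'I_d -> 'I_d -> nat) :
  (forall i, \sum_j K i j = s)%N -> (forall j, \sum_i K i j = s)%N ->
  exists p : 'S_(d * s), forall i j,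
    #|[pred a | (mxvec_unindex (p (mxvec_index i a))).1 == j]| = K i j.
Proof.
move=> Krow Kcol.
pose lab i := flatten [seq nseq (K i j) j | j <- enum 'I_d].
have count_lab i j : count_mem j (lab i) = K i j.
  rewrite count_flatten sumnE !big_map -enumT big_enum /= (bigD1 j) //=.
  rewrite count_nseq /= eqxx.
  by rewrite mul1n big1 ?addn0 // => k /negPf; rewrite count_nseq /= => ->.
have size_lab i : size (lab i) = s.
  rewrite -(Krow i) size_flatten sumnE !big_map -enumT big_enum /=.
  by apply: eq_bigr => j _; rewrite size_nseq.
have card_lab i j : #|[pred a : 'I_s | nth i (lab i) a == j]| = K i j.
  by rewrite -count_lab -sum1_card -sum1_count (big_nth i) size_lab big_mkord.
(* Row (i, a) is to be sent into block-column (lab i)_a. *)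
pose f (k : 'I_(d * s)) := let: (i, a) := mxvec_unindex k in nth i (lab i) a.
pose block (k : 'I_(d * s)) := (mxvec_unindex k).1.
have [p fp] : exists p : 'S_(d * s), forall k, f k = block (p k).
  apply: eq_fibres_perm => j; rewrite !card_sum_mxvec_index.
  transitivity (\sum_i K i j)%N.
    apply: eq_bigr => i _; rewrite -card_lab; apply: eq_card => a.
    by rewrite !inE /f mxvec_indexK.
  rewrite Kcol (bigD1 j) //= big1 ?addn0 => [|i /negPf ij].
    rewrite -[LHS]card_ord; apply: eq_card => a.
    by rewrite !inE /block mxvec_indexK eqxx.
  by apply: eq_card0 => a; rewrite !inE /block mxvec_indexK ij.
exists p => i j; rewrite -card_lab; apply: eq_card => a.
by rewrite !inE -[(mxvec_unindex _).1]/(block _) -fp /f mxvec_indexK.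
Qed.

Section PhiBistochastic.
Variable R : realType.

Lemma sqmod_ge0 (z : R[i]) : 0 <= sqmod z.
Proof. by rewrite /sqmod addr_ge0 // sqr_ge0. Qed.

Lemma Re_sum I (r : seq I) (P : pred I) (F : I -> R[i]) :
  complex.Re (\sum_(k <- r | P k) F k) = \sum_(k <- r | P k) complex.Re (F k).
Proof. by apply: (big_morph (@complex.Re R)) => // -[a b] [c d]. Qed.

Lemma Re_mulcJ (z : R[i]) : complex.Re (z * conjc z) = sqmod z.
Proof. by case: z => a b /=; rewrite /sqmod mulrN opprK !expr2. Qed.

Lemma Re_mulJc (z : R[i]) : complex.Re (conjc z * z) = sqmod z.
Proof. by case: z => a b /=; rewrite /sqmod mulNr opprK !expr2. Qed.

Lemma unitary_row_sqmod n (U : 'M[R[i]]_n) r :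
  unitary U -> \sum_c sqmod (U r c) = 1.
Proof.
case=> /(congr1 (fun M : 'M[R[i]]_n => complex.Re (M r r))) + _.
rewrite !mxE eqxx Re_sum /= => <-.
by apply: eq_bigr => c _; rewrite /adjmx !mxE Re_mulcJ.
Qed.

Lemma unitary_col_sqmod n (U : 'M[R[i]]_n) c :
  unitary U -> \sum_r sqmod (U r c) = 1.
Proof.
case=> _ /(congr1 (fun M : 'M[R[i]]_n => complex.Re (M c c))).
rewrite !mxE eqxx Re_sum /= => <-.
by apply: eq_bigr => r _; rewrite /adjmx !mxE Re_mulJc.
Qed.

Lemma frob2_blockmx d s (U : 'M[R[i]]_(d * s)) i j :
  frob2 (blockmx U i j)
  = \sum_a \sum_b sqmod (U (mxvec_index i a) (mxvec_index j b)).
Proof. by apply: eq_bigr => a _; apply: eq_bigr => b _; rewrite mxE. Qed.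

Lemma phi_bistochastic d s (U : 'M[R[i]]_(d * s)) :
  (0 < s)%N -> unitary U -> bistochastic (phi U).
Proof.
move=> s_gt0 hU; have s_neq0 : s%:R != 0 :> R by rewrite pnatr_eq0 -lt0n.
have line_sum (f : 'I_d -> 'I_s -> 'I_(d * s) -> R) :
    (forall a, \sum_j \sum_b f j a (mxvec_index j b) = 1) ->
    \sum_j s%:R^-1 * \sum_a \sum_b f j a (mxvec_index j b) = 1.
  move=> f1; rewrite -mulr_sumr exchange_big /=.
  by under eq_bigr do rewrite f1; rewrite sumr_const card_ord mulVf.
split; [|split].
- move=> i j; rewrite mxE mulr_ge0 ?invr_ge0 ?ler0n //.
  by apply: sumr_ge0 => a _; apply: sumr_ge0 => b _; apply: sqmod_ge0.
- move=> i; under eq_bigr do rewrite mxE frob2_blockmx.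
  apply: (line_sum (fun j a k => sqmod (U (mxvec_index i a) k))) => a.
  by rewrite (sum_mxvec_index (fun k => sqmod (U _ k))) unitary_row_sqmod.
- move=> j; under eq_bigr do rewrite mxE frob2_blockmx exchange_big /=.
  apply: (line_sum (fun i b k => sqmod (U k (mxvec_index j b)))) => b.
  by rewrite (sum_mxvec_index (fun k => sqmod (U k _))) unitary_col_sqmod.
Qed.

Lemma continuous_sum (T : topologicalType) (V : normedModType R) I (r : seq I)
    (F : I -> T -> V) :
  (forall k, continuous (F k)) -> continuous (fun x => \sum_(k <- r) F k x).
Proof.
move=> Fc; elim: r => [|k r IHr].
  by under eq_fun do rewrite big_nil; exact: cst_continuous.
under eq_fun do rewrite big_cons.
by move=> x; apply: cvgD; [exact: Fc | exact: IHr].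
Qed.

Lemma closed_bistochastic d : closed (@bistochastic R d).
Proof.
have closed_forall I (A : I -> set 'M[R]_d) :
    (forall k, closed (A k)) -> closed [set B | forall k, A k B].
  move=> Acl; have := closed_bigI (D := setT) (fun k _ => Acl k).
  by congr closed; apply/seteqP; split=> B AB k //; apply: AB.
have closed_sum_eq1 (F : 'M[R]_d -> 'I_d -> R) :
    (forall k, continuous (F^~ k)) -> closed [set B | \sum_k F B k = 1].
  move=> Fc; apply: (continuous_closedP _).1 (@closed_eq _ 1).
  exact: continuous_sum.
apply: closedI; [|apply: closedI]; apply: (closed_forall) => i.
- apply: (closed_forall) => j.
  apply: (continuous_closedP _).1 (@closed_ge R 0).
  exact: (@coord_continuous _ d d i j).
- apply: (closed_sum_eq1 (fun B j => B i j)) => j.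
  exact: (@coord_continuous _ d d i j).
- apply: (closed_sum_eq1 (fun B j => B j i)) => j.
  exact: (@coord_continuous _ d d j i).
Qed.

Lemma gen_unistochastic_all_sub d :
  @gen_unistochastic_all R d `<=` @bistochastic R d.
Proof. by move=> _ [s s_gt0 [U [hU <-]]]; exact: phi_bistochastic. Qed.

End PhiBistochastic.

Section PermutationMatrices.
Variable R : realType.

Lemma sqmod_bool (b : bool) : sqmod (b%:R : R[i]) = b%:R.
Proof. by case: b; rewrite /sqmod /= ?expr0n /= ?expr1n ?addr0. Qed.

Lemma unitary_perm_mx n (p : 'S_n) : unitary (perm_mx p : 'M[R[i]]_n).
Proof.
have adj_p : adjmx (perm_mx p : 'M[R[i]]_n) = perm_mx p^-1.
  by rewrite /adjmx map_perm_mx tr_perm_mx.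
by rewrite /unitary adj_p -!perm_mxM mulgV mulVg perm_mx1.
Qed.

Lemma phi_perm_mx d s (p : 'S_(d * s)) i j :
  phi (perm_mx p : 'M[R[i]]_(d * s)) i j
  = s%:R^-1 * #|[pred a | (mxvec_unindex (p (mxvec_index i a))).1 == j]|%:R.
Proof.
rewrite mxE frob2_blockmx -sum1_card natr_sum [in RHS]big_mkcond /=.
congr (_ * _); apply: eq_bigr => a _; rewrite inE.
under eq_bigr do rewrite !mxE sqmod_bool.
case/mxvec_indexP: (p _) => j' b'; rewrite mxvec_indexK /=.
under eq_bigr do rewrite eq_mxvec_index xpair_eqE.
case: (eqVneq j' j) => _; last by rewrite big1.
by rewrite (bigD1 b') //= eqxx big1 ?addr0 // => b /negPf nb; rewrite eq_sym nb.
Qed.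

Lemma gen_unistochastic_nat_mx d s (K : 'I_d -> 'I_d -> nat) :
  (forall i, \sum_j K i j = s)%N -> (forall j, \sum_i K i j = s)%N ->
  gen_unistochastic s (\matrix_(i, j) (s%:R^-1 * (K i j)%:R) : 'M[R]_d).
Proof.
move=> Krow Kcol; have [p Kp] := exists_block_perm Krow Kcol.
exists (perm_mx p); split; first exact: unitary_perm_mx.
by apply/matrixP => i j; rewrite phi_perm_mx Kp mxE.
Qed.

End PermutationMatrices.

Section Rounding.
Variables (R : realType) (n s : nat).
Local Notation widen := (widen_ord (leqnSn n)).

Definition frac (x : R) := x - (Num.truncn x)%:R.

Lemma frac_ge0 x : 0 <= x -> 0 <= frac x.
Proof. by move=> /truncn_itv /andP[trunc_le _]; rewrite subr_ge0. Qed.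

Lemma frac_lt1 x : 0 <= x -> frac x < 1.
Proof. by move=> /truncn_itv /andP[_]; rewrite -natr1 /frac; lra. Qed.

Lemma sum_frac_itv (x : 'I_n -> R) : (forall k, 0 <= x k) ->
  0 <= \sum_k frac (x k) <= n%:R.
Proof.
move=> x_ge0; rewrite sumr_ge0 => [|k _]; last exact: frac_ge0.
rewrite -[n in n%:R]card_ord -sumr_const ler_sum // => k _.
exact/ltW/frac_lt1.
Qed.

Definition complete_last (f : 'I_n.+1 -> nat) (j : 'I_n.+1) : nat :=
  if j == ord_max then (s - \sum_(k < n) f (widen k))%N else f j.

Lemma widen_neq_max (k : 'I_n) : (widen k == ord_max) = false.
Proof. by apply/negbTE; rewrite -val_eqE /= neq_ltn ltn_ord. Qed.

Lemma lift_max_widen (k : 'I_n) : lift ord_max k = widen k.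
Proof. exact/val_inj/lift_max. Qed.

Lemma complete_last_widen f k : complete_last f (widen k) = f (widen k).
Proof. by rewrite /complete_last widen_neq_max. Qed.

Lemma sum_complete_last f :
  (\sum_(k < n) f (widen k) <= s)%N -> (\sum_j complete_last f j = s)%N.
Proof.
move=> f_le; rewrite big_ord_recr /= {2}/complete_last eqxx.
by under eq_bigr do rewrite complete_last_widen; rewrite subnKC.
Qed.

Lemma eq_complete_last_max f g : (forall k, f (widen k) = g (widen k)) ->
  complete_last f ord_max = complete_last g ord_max.
Proof.
by move=> fg; rewrite /complete_last eqxx; under eq_bigr do rewrite fg.
Qed.

Section TruncatedVector.
Variable v : 'I_n.+1 -> R.
Hypotheses (v_ge0 : forall j, 0 <= v j) (v_sum : \sum_j v j = s%:R).

Lemma sum_truncn_le : (\sum_(k < n) Num.truncn (v (widen k)) <= s)%N.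
Proof.
rewrite -(ler_nat R) natr_sum -v_sum big_ord_recr /= -[X in X <= _]addr0.
by rewrite lerD // ler_sum // => k _; rewrite truncn_le.
Qed.

Lemma natr_complete_last_truncn :
  (complete_last (fun j => Num.truncn (v j)) ord_max)%:R
  = v ord_max + \sum_(k < n) frac (v (widen k)).
Proof.
rewrite /complete_last eqxx natrB ?sum_truncn_le //.
rewrite natr_sum -v_sum big_ord_recr.
by rewrite /frac sumrB /=; lra.
Qed.

End TruncatedVector.

Section RoundingMatrix.
Variable r : 'I_n.+1 -> 'I_n.+1 -> R.
Hypotheses (r_ge0 : forall i j, 0 <= r i j)
  (r_row : forall i, \sum_j r i j = s%:R)
  (r_col : forall j, \sum_i r i j = s%:R)
  (r_corner : (n * n)%:R <= r ord_max ord_max).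

(* Round down off the last row and column, complete the last column and then
   the last row; the corner absorbs the sum of all fractional parts, which is at
   most n * n, whence r_corner. *)
Definition round_rows i := complete_last (fun j => Num.truncn (r i j)).
Definition round_mx i j := complete_last (round_rows^~ j) i.

Let frac_row i := \sum_(k < n) frac (r i (widen k)).

Lemma natr_round_rows_max i :
  (round_rows i ord_max)%:R = r i ord_max + frac_row i.
Proof. exact: natr_complete_last_truncn. Qed.

Lemma natr_sum_round_rows_max :
  (\sum_(i < n) round_rows (widen i) ord_max)%:R
  = s%:R - r ord_max ord_max + \sum_(i < n) frac_row (widen i).
Proof.
rewrite natr_sum; under eq_bigr do rewrite natr_round_rows_max.
by rewrite big_split /= -(r_col ord_max) big_ord_recr /=; lra.
Qed.

Lemma sum_frac_rows_itv :
  0 <= \sum_(i < n) frac_row (widen i) <= (n * n)%:R.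
Proof.
have frac_row_itv i := sum_frac_itv (fun k => r_ge0 i (widen k)).
rewrite sumr_ge0 => [|i _]; last by case/andP: (frac_row_itv (widen i)).
rewrite (@le_trans _ _ (\sum_(i < n) n%:R)) ?ler_sum => // [i _|].
  by case/andP: (frac_row_itv (widen i)).
by rewrite sumr_const card_ord natrM mulr_natl.
Qed.

Lemma sum_round_rows_max_le :
  (\sum_(i < n) round_rows (widen i) ord_max <= s)%N.
Proof.
rewrite -(ler_nat R) natr_sum_round_rows_max.
by case/andP: sum_frac_rows_itv => _ /le_trans/(_ r_corner); lra.
Qed.

Lemma round_mx_col j : (\sum_i round_mx i j = s)%N.
Proof.
apply: sum_complete_last; case: (unliftP ord_max j) => [k ->|->].
  rewrite lift_max_widen.
  under eq_bigr do rewrite /round_rows complete_last_widen.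
  exact: (sum_truncn_le (fun i => r_ge0 i _)).
exact: sum_round_rows_max_le.
Qed.

Lemma round_mx_row i : (\sum_j round_mx i j = s)%N.
Proof.
have row_widen k : (\sum_j round_mx (widen k) j = s)%N.
  under eq_bigr do rewrite /round_mx complete_last_widen.
  exact/sum_complete_last/(sum_truncn_le (r_ge0 _)).
case: (unliftP ord_max i) => [k ->|->]; first by rewrite lift_max_widen.
have : (\sum_i \sum_j round_mx i j = n.+1 * s)%N.
  rewrite exchange_big; under eq_bigr do rewrite round_mx_col.
  by rewrite sum_nat_const card_ord.
rewrite big_ord_recr /=; under eq_bigr do rewrite row_widen.
rewrite sum_nat_const card_ord mulSn addnC => /eqP.
by rewrite eqn_add2r => /eqP.
Qed.

Lemma round_mx_err i j : `|(round_mx i j)%:R - r i j| <= (n * n)%:R.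
Proof.
have frac_sum_small (x : 'I_n -> R) :
    (forall k, 0 <= x k) -> `|\sum_k frac (x k)| <= (n * n)%:R.
  move=> /sum_frac_itv /andP[ge0 le_n]; rewrite ger0_norm // (le_trans le_n) //.
  by rewrite ler_nat; case: (n) => // m; rewrite leq_pmulr.
case: (unliftP ord_max i) => [k ->|->]; case: (unliftP ord_max j) => [l ->|->];
  rewrite ?lift_max_widen /round_mx ?complete_last_widen.
- have n_gt0 : (0 < n)%N by apply: leq_ltn_trans (ltn_ord k).
  rewrite /round_rows complete_last_widen distrC.
  rewrite ger0_norm ?frac_ge0 // (le_trans (ltW (frac_lt1 _))) // ler1n.
  by rewrite muln_gt0 n_gt0.
- by rewrite natr_round_rows_max addrC addKr; exact: frac_sum_small.
- rewrite (@eq_complete_last_max _ (fun i => Num.truncn (r i (widen l)))).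
    by rewrite natr_complete_last_truncn // addrC addKr; exact: frac_sum_small.
  by move=> k; rewrite /round_rows complete_last_widen.
- rewrite /complete_last eqxx natrB ?sum_round_rows_max_le //.
  rewrite natr_sum_round_rows_max.
  by case/andP: sum_frac_rows_itv => ge0 le_sq; rewrite ler_norml; lra.
Qed.

Lemma round_mx_spec :
  [/\ forall i, (\sum_j round_mx i j = s)%N,
      forall j, (\sum_i round_mx i j = s)%N
    & forall i j, `|(round_mx i j)%:R - r i j| <= (n * n)%:R].
Proof.
by split; [exact: round_mx_row | exact: round_mx_col | exact: round_mx_err].
Qed.

End RoundingMatrix.
End Rounding.

Section Approximation.
Variable R : realType.

Lemma bistochastic_le1 d (B : 'M[R]_d) i j : bistochastic B -> B i j <= 1.
Proof.
case=> B_ge0 [B_row _]; rewrite -(B_row i) (bigD1 j) //= lerDl.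
by apply: sumr_ge0 => k _; apply: B_ge0.
Qed.

Lemma bistochastic_mix_id d (B : 'M[R]_d) t : bistochastic B -> 0 <= t <= 1 ->
  bistochastic ((1 - t) *: B + t%:M).
Proof.
case=> B_ge0 [B_row B_col] /andP[t_ge0 t_le1].
have delta_sum k : \sum_l t *+ (l == k) = t.
  by rewrite (bigD1 k) //= eqxx big1 ?addr0 // => l /negPf ->.
split; [|split] => [i j|i|j]; rewrite ?mxE.
- by rewrite addr_ge0 ?mulrn_wge0 // mulr_ge0 ?subr_ge0.
- under eq_bigr do rewrite !mxE.
  rewrite big_split /= -mulr_sumr B_row mulr1.
  by under eq_bigr do rewrite eq_sym; rewrite delta_sum subrK.
- under eq_bigr do rewrite !mxE.
  rewrite big_split /= -mulr_sumr B_col mulr1.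
  by rewrite delta_sum subrK.
Qed.

Lemma bistochastic_nat_approx n (B : 'M[R]_n.+1) e :
  bistochastic B -> 0 < e ->
  exists s (K : 'I_n.+1 -> 'I_n.+1 -> nat),
    [/\ (0 < s)%N, forall i, (\sum_j K i j = s)%N,
      forall j, (\sum_i K i j = s)%N
      & forall i j, `|B i j - s%:R^-1 * (K i j)%:R| < e].
Proof.
move=> hB e_gt0; pose t := Num.min (e / 2) 1.
have t_gt0 : 0 < t by rewrite lt_min ltr01 andbT divr_gt0.
have t_le1 : t <= 1 by rewrite ge_min lexx orbT.
have t_le_e : t <= e / 2 by rewrite ge_min lexx.
pose N : R := (n * n)%:R.
pose s := (Num.truncn (2 * N / t)).+1.
have s_gt0 : 0 < s%:R :> R by rewrite ltr0n.
have sN : 2 * N < s%:R * t by rewrite -ltr_pdivrMr // truncnS_gt.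
(* The corner entry of s * B' is at least s * t > n * n. *)
pose B' := (1 - t) *: B + t%:M.
have [B'_ge0 [B'_row B'_col]] : bistochastic B'.
  by apply: bistochastic_mix_id; rewrite ?(ltW t_gt0).
pose r i j := s%:R * B' i j.
have [||||K_row K_col K_err] := @round_mx_spec R n s r.
- by move=> i j; rewrite mulr_ge0 ?ler0n.
- by move=> i; rewrite -mulr_sumr B'_row mulr1.
- by move=> j; rewrite -mulr_sumr B'_col mulr1.
- rewrite /r /B' !mxE eqxx mulr1n mulrDr.
  have : 0 <= s%:R * ((1 - t) * B ord_max ord_max).
    by rewrite !mulr_ge0 ?ler0n ?subr_ge0 ?(proj1 hB).
  by move: (ler0n R (n * n)) sN; rewrite /N; lra.
exists s, (round_mx s r); split => // i j.
have B_le1 := bistochastic_le1 i j hB; have B_ge0 := proj1 hB i j.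
have B'_near : `|B i j - B' i j| <= t.
  rewrite /B' !mxE ler_norml; case: (i == j) => /=; nra.
have K_near : `|B' i j - s%:R^-1 * (round_mx s r i j)%:R| <= s%:R^-1 * N.
  rewrite -[B' i j](mulKf (lt0r_neq0 s_gt0)) -mulrBr normrM.
  rewrite ger0_norm ?invr_ge0 ?ler0n //.
  by rewrite ler_pM2l ?invr_gt0 // distrC K_err.
have N_small : s%:R^-1 * N <= t / 2.
  by rewrite -(ler_pM2l s_gt0) mulrA mulfV ?gt_eqF // mul1r; lra.
have := ler_distD (B' i j) (B i j) (s%:R^-1 * (round_mx s r i j)%:R).
lra.
Qed.

End Approximation.

Lemma closure_entrywise (R : realType) d (S : set 'M[R]_d) (B : 'M[R]_d) :
  (forall e, 0 < e -> exists2 A, S A & forall i j, `|B i j - A i j| < e) ->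
  closure S B.
Proof.
move=> near_S N /nbhs_ballP[e e_gt0 ballN]; have [A SA AB] := near_S e e_gt0.
by exists A; split => //; apply: ballN; split.
Qed.

Theorem theorem2p8 (R : realType) (d : nat) :
  (2 <= d)%N ->
  closure (@gen_unistochastic_all R d) = @bistochastic R d.
Proof.
case: d => [//|n] _; apply/seteqP; split.
  rewrite [X in _ `<=` X](closure_id _).1; last exact: closed_bistochastic.
  exact/closureS/gen_unistochastic_all_sub.
move=> B hB; apply: closure_entrywise => e e_gt0.
have [s [K [s_gt0 K_row K_col K_near]]] := bistochastic_nat_approx hB e_gt0.
exists (\matrix_(i, j) (s%:R^-1 * (K i j)%:R)); last by move=> i j; rewrite mxE.
by exists s => //; exact: gen_unistochastic_nat_mx.
Qed.
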